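(* Let $\mathcal{A}$ be a central and essential arrangement in $\mathbb{Q}^l$ as in the context, $\sigma$ a term ordering, and $p$ a prime that is good and $(\sigma,l)$-lucky for $\mathcal{A}$. Let $q$ be a power of $p$. Then $$\overline{\chi}_{\mathcal{A}}(q,t)=\sum_{P\in\mathbb{F}_q^l}t^{h(P)},$$ where $h(P)$ is the number of hyperplanes of $\mathcal{A}_{\mathbb{F}_q}$ containing $P$.
   Context: $\mathcal{A}=\{H_1,\dots,H_n\}$: $n$ distinct linear hyperplanes in $\mathbb{Q}^l$ with $\bigcap H_i=\{0\}$, $H_i=\{\alpha_i=0\}$, $\alpha_i\in\mathbb{Z}[x_1,\dots,x_l]$ a nonzero linear form whose coefficients are not all divisible by any prime, $Q(\mathcal{A})=\prod\alpha_i$. $p$ is good if the reduction of $Q(\mathcal{A})$ mod $p$ is reduced (no reduction $(\alpha_i)_p$ is a scalar multiple of $(\alpha_j)_p$, $i<j$). $\mathcal{A}_{\mathbb{F}_q}$ is the arrangement in $\mathbb{F}_q^l$ defined by the image of $Q(\mathcal{A})$ in $\mathbb{F}_q[x_1,\dots,x_l]$, i.e. the hyperplanes $\{\bar\alpha_i=0\}$. For a term ordering $\sigma$ and nonzero $f\in\mathbb{Z}[x_1,\dots,x_l]$, $\mathrm{LM}_\sigma(f)$ is the $\sigma$-leading term times its coefficient $\mathrm{LC}_\sigma(f)$. A minimal strong $\sigma$-Gröbner basis of an ideal $I\subseteq\mathbb{Z}[x_1,\dots,x_l]$ is a finite generating set $G$ of nonzero elements of $I$ such that every nonzero $f\in I$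 has $\mathrm{LM}_\sigma(f)$ divisible by some $\mathrm{LM}_\sigma(g)$, $g\in G$, and no $\mathrm{LM}_\sigma(g)$ divides $\mathrm{LM}_\sigma(g')$ for distinct $g,g'$; its set of leading coefficients is independent of the choice. $p$ is $\sigma$-lucky for $I$ if it divides none of these leading coefficients; $p$ is $(\sigma,l)$-lucky for $\mathcal{A}$ if it is $\sigma$-lucky for every ideal $\langle\alpha_{i_1},\dots,\alpha_{i_l}\rangle$ with $i_1<\dots<i_l$ and $\operatorname{codim}(H_{i_1}\cap\dots\cap H_{i_l})=l$. The coboundary polynomial is $\overline{\chi}_{\mathcal{A}}(x,y)=\sum_{\mathcal{B}\subseteq\mathcal{A}}x^{\mathrm{rk}(\mathcal{A})-\mathrm{rk}(\mathcal{B})}(y-1)^{|\mathcal{B}|}$, where $\mathrm{rk}(\mathcal{B})=\operatorname{codim}\bigcap_{H\in\mathcal{B}}H$ (the sum is over all subsets since $\mathcal{A}$ is central). *)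

From HB Require Import structures.
From mathcomp Require Import all_boot all_order all_algebra all_field.
From mathcomp Require Import mpoly.
Set Implicit Arguments. Unset Strict Implicit. Unset Printing Implicit Defensive.
Import Order.TTheory GRing.Theory Num.Theory.
Local Open Scope ring_scope.

Definition is_term_order (l : nat) (le : rel 'X_{1..l}) : Prop :=
  (forall m, le m m) /\
  [/\ (forall m1 m2, le m1 m2 -> le m2 m1 -> m1 = m2),
      (forall m1 m2 m3, le m1 m2 -> le m2 m3 -> le m1 m3),
      (forall m1 m2, le m1 m2 || le m2 m1),
      (forall m, le 0%MM m) &
      (forall m1 m2 m, le m1 m2 -> le (m1 + m)%MM (m2 + m)%MM)].

(* sigma-leading monomial (exponent vector) of f: the le-largest      *)
(* monomial in the support of f (meaningful for f != 0).              *)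
Definition lead_mnm (l : nat) (le : rel 'X_{1..l}) (f : {mpoly int[l]}) : 'X_{1..l} :=
  foldr (fun m acc => if le acc m then m else acc) 0%MM (msupp f).

Definition lead_cf (l : nat) (le : rel 'X_{1..l}) (f : {mpoly int[l]}) : int :=
  f@_(lead_mnm le f).

(* LM_sigma(g) divides LM_sigma(f) in Z[x]:  LC(g) x^a | LC(f) x^b     *)
(* iff LC(g) | LC(f) in Z and x^a | x^b.                               *)
Definition LM_dvd (l : nat) (le : rel 'X_{1..l}) (g f : {mpoly int[l]}) : bool :=
  ((lead_cf le g %| lead_cf le f)%Z && (lead_mnm le g <= lead_mnm le f)%MM).

Definition in_ideal (l : nat) (gs : seq {mpoly int[l]}) (f : {mpoly int[l]}) : Prop :=
  exists cs : seq {mpoly int[l]},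
    size cs = size gs /\ f = \sum_(i < size gs) cs`_i * gs`_i.

Definition min_strong_GB (l : nat) (le : rel 'X_{1..l})
    (I : {mpoly int[l]} -> Prop) (G : seq {mpoly int[l]}) : Prop :=
  [/\ (forall g, g \in G -> g != 0 /\ I g),
      (forall f, I f <-> in_ideal G f),
      (forall f, I f -> f != 0 -> exists2 g, g \in G & LM_dvd le g f) &
      (forall i j, (i < size G)%N -> (j < size G)%N -> i != j ->
         ~~ LM_dvd le G`_i G`_j)].

(* p is sigma-lucky for I: p divides none of the leading coefficients *)
(* of a minimal strong Groebner basis (these are independent of the    *)
(* choice of the basis; we quantify over all such bases).             *)
Definition sigma_lucky (l : nat) (le : rel 'X_{1..l}) (I : {mpoly int[l]} -> Prop)
    (p : nat) : Prop :=
  forall G, min_strong_GB le I G -> forall g, g \in G -> ~~ (p%:Z %| lead_cf le g)%Z.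

(* Arrangements: alpha i is the coefficient (row) vector of alpha_i.  *)
Section Arrangement.
Variables (l n : nat) (alpha : 'I_n -> 'rV[int]_l).

Definition lin_form (i : 'I_n) : {mpoly int[l]} :=
  \sum_(j < l) alpha i ord0 j *: 'X_j.

(* H_i = {x in Q^l | alpha_i(x) = 0}, as a subspace of row vectors. *)
Definition hyp (i : 'I_n) : 'M[rat]_l :=
  kermx ((map_mx (fun z : int => z%:~R) (alpha i))^T).

Definition rk (B : {set 'I_n}) : nat :=
  (l - \rank (\bigcap_(i in B) hyp i)%MS)%N.

(* coboundary polynomial, as a polynomial in y with coefficients in Z[x] *)
Definition coboundary : {poly {poly int}} :=
  \sum_(B : {set 'I_n})
     (('X ^+ (rk setT - rk B)%N : {poly int})%:P) * ('X - 1) ^+ #|B|.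

Definition coboundary_at (q : nat) : {poly int} :=
  map_poly (fun c : {poly int} => c.[q%:R]) coboundary.

Definition red (R : nzRingType) (i : 'I_n) : 'rV[R]_l :=
  map_mx (fun z : int => z%:~R) (alpha i).

Definition hcount (F : finFieldType) (P : 'rV[F]_l) : nat :=
  #|[set i : 'I_n | \sum_(j < l) red F i ord0 j * P ord0 j == 0]|.

Definition good_prime (p : nat) : Prop :=
  forall i j : 'I_n, (i < j)%N -> forall c : 'F_p, red 'F_p i != c *: red 'F_p j.

Definition lucky_prime (le : rel 'X_{1..l}) (p : nat) : Prop :=
  forall S : {set 'I_n}, #|S| = l -> rk S = l ->
    sigma_lucky le (in_ideal [seq lin_form i | i <- enum S]) p.

End Arrangement.

(** Writing [t^h(P) = ((t - 1) + 1)^h(P)] as a sum over the sets [B] of hyperplanes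
   through [P] and counting, for each [B], the points of [F_q^l] on all of [B] turns
   the right-hand side into [sum_B q^(l - rank_{F_q} B) (t - 1)^|B|].  So it suffices
   that every [B] has the same rank over [Q] and over [F_q], i.e. that both fields
   have the same independent sets; extending to bases, this comes down to showing
   that for a basis [S] the integer matrix [M] of its forms has [p] not dividing
   [det M].  This is where luckiness enters: [det M * x_j] lies in the ideal of the
   forms of [S], so some element [g] of a minimal strong Groebner basis has leading
   term [c x_j] with [p] not dividing [c]; the linear part of [g] is a combination
   [w_j M] whose coefficients vanish on the variables above [x_j] in the term order.
   The rows [w_j M] form a matrix that is triangular modulo [p] with invertible
   diagonal, so [det M] is a unit modulo [p].  Such a Groebner basis exists for any
   finitely generated ideal of [Z[x]], by Dickson's lemma. *)

From HB Require Import structures.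
From mathcomp Require Import all_boot all_order all_algebra all_field.
From mathcomp Require Import mpoly mxabelem.
From Stdlib Require Import ClassicalEpsilon.
Set Implicit Arguments. Unset Strict Implicit. Unset Printing Implicit Defensive.
Import Order.TTheory GRing.Theory Num.Theory.
Local Open Scope ring_scope.

(** * Term orders and leading monomials *)

Section FoldrMax.
Variables (T : eqType) (r : rel T).
Hypotheses (r_total : total r) (r_trans : transitive r).

Definition foldr_max (x0 : T) (s : seq T) : T :=
  foldr (fun m acc => if r acc m then m else acc) x0 s.

Lemma foldr_max_mem x0 s : foldr_max x0 s \in x0 :: s.
Proof.
elim: s => [|x s IH] /=; first by rewrite inE.
case: ifP => _; first by rewrite !inE eqxx orbT.
by move: IH; rewrite !inE => /orP [->|->]; rewrite ?orbT.
Qed.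

Lemma foldr_max_ub x0 s m : m \in s -> r m (foldr_max x0 s).
Proof.
elim: s => [|x s IH] //=; rewrite inE => /orP [/eqP ->|/IH hm]; case: ifP => hx //.
- by have := r_total x x; rewrite orbb.
- by have := r_total (foldr_max x0 s) x; rewrite hx.
- exact: r_trans hx.
Qed.

End FoldrMax.

Section TermOrder.
Variables (l : nat) (le : rel 'X_{1..l}).
Hypothesis (Hle : is_term_order le).

Lemma tord_refl m : le m m. Proof. by case: Hle. Qed.
Lemma tord_anti m1 m2 : le m1 m2 -> le m2 m1 -> m1 = m2.
Proof. by case: Hle => _ [H _ _ _ _]; apply: H. Qed.
Lemma tord_trans m2 m1 m3 : le m1 m2 -> le m2 m3 -> le m1 m3.
Proof. by case: Hle => _ [_ H _ _ _]; apply: H. Qed.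
Lemma tord_total : total le.
Proof. by case: Hle => _ [_ _ H _ _]. Qed.
Lemma tord0m m : le 0%MM m.
Proof. by case: Hle => _ [_ _ _ H _]. Qed.
Lemma tord_addr m m1 m2 : le m1 m2 -> le (m1 + m)%MM (m2 + m)%MM.
Proof. by case: Hle => _ [_ _ _ _ H]; apply: H. Qed.
Lemma tord_addl m m1 m2 : le m1 m2 -> le (m + m1)%MM (m + m2)%MM.
Proof. by rewrite ![(m + _)%MM]addmC; apply: tord_addr. Qed.

Lemma tord_divides m1 m2 : (m1 <= m2)%MM -> le m1 m2.
Proof. by move=> h; rewrite -(submK h) -{1}[m1]add0m tord_addr ?tord0m. Qed.

Implicit Types (f : {mpoly int[l]}) (m : 'X_{1..l}).

Lemma lead_mnm_ub f m : m \in msupp f -> le m (lead_mnm le f).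
Proof. exact: foldr_max_ub tord_total tord_trans 0%MM (msupp f) m. Qed.

Lemma lead_mnm_supp f : f != 0 -> lead_mnm le f \in msupp f.
Proof.
rewrite -msupp_eq0 => nz.
have : lead_mnm le f \in 0%MM :: msupp f := foldr_max_mem le 0%MM (msupp f).
rewrite inE => /orP [/eqP E|] //.
have [m sm] : exists m, m \in msupp f.
  by case: (msupp f) nz => // m s _; exists m; rewrite inE eqxx.
by have := lead_mnm_ub sm; rewrite E => hm; rewrite -(tord_anti hm (tord0m m)).
Qed.

Lemma lead_mnm_eq f m : m \in msupp f ->
  (forall m', m' \in msupp f -> le m' m) -> lead_mnm le f = m.
Proof.
move=> hm H; apply: tord_anti (lead_mnm_ub hm); apply: H; apply: lead_mnm_supp.
by apply: contraTneq hm => ->; rewrite msupp0.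
Qed.

Lemma lead_cf_eq0 f : (lead_cf le f == 0) = (f == 0).
Proof.
apply/idP/idP => [|/eqP->]; last by rewrite /lead_cf mcoeff0.
by apply: contraLR => /lead_mnm_supp; rewrite mcoeff_msupp.
Qed.

Lemma mcoeffMX_le f u m :
  (f * 'X_[u])@_m = if (u <= m)%MM then f@_(m - u)%MM else 0.
Proof.
case: ifP => h; first by rewrite -{1}(submK h) addmC mcoeffMX.
apply/eqP; rewrite mcoeff_eq0 (perm_mem (msuppMX _ _)).
by apply: contraFN h => /mapP [m' _ ->]; rewrite lem_addr.
Qed.

Lemma lead_mnmMX f u : f != 0 -> lead_mnm le (f * 'X_[u]) = (u + lead_mnm le f)%MM.
Proof.
move=> nz; apply: lead_mnm_eq => [|m']; rewrite (perm_mem (msuppMX _ _)).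
  exact/map_f/lead_mnm_supp.
by case/mapP=> m /lead_mnm_ub hm ->; apply: tord_addl.
Qed.

Lemma lead_cfMX f u : f != 0 -> lead_cf le (f * 'X_[u]) = lead_cf le f.
Proof. by move=> nz; rewrite /lead_cf lead_mnmMX // mcoeffMX. Qed.

End TermOrder.

(** * Dickson's lemma *)

Lemma classical_ex_minn (P : nat -> Prop) :
  (exists v, P v) -> exists2 v, P v & forall w, P w -> (v <= w)%N.
Proof.
move=> [v0 Pv0]; apply: NNPP => nomin; move: v0 Pv0.
elim/ltn_ind=> v IH Pv; apply: nomin; exists v => // w Pw.
by rewrite leqNgt; apply/negP => /IH; apply.
Qed.

Lemma nat_monotone_subseq (t : nat -> nat) : exists psi : nat -> nat,
  (forall i, (psi i < psi i.+1)%N) /\ (forall i, (t (psi i) <= t (psi i.+1))%N).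
Proof.
have tail_min a : exists b, (a < b)%N /\ forall c, (a < c)%N -> (t b <= t c)%N.
  have [_ [b [ab <-]] bmin] := classical_ex_minn
    (ex_intro (fun v => exists b, (a < b)%N /\ t b = v) _ (ex_intro _ a.+1 (conj (ltnSn a) erefl))).
  by exists b; split=> // c ac; apply: bmin; exists c.
have [nxt nxtP] := choice _ tail_min.
exists (fun i => iter i.+1 nxt 0%N); split=> i; rewrite [iter i.+2 _ _]iterS.
  by case: (nxtP (iter i.+1 nxt 0%N)).
have [lt1 min1] := nxtP (iter i nxt 0%N); have [lt2 _] := nxtP (iter i.+1 nxt 0%N).
exact/min1/(ltn_trans lt1 lt2).
Qed.

Section Dickson.
Variable l : nat.

Lemma dickson (s : nat -> 'X_{1..l}) : exists phi : nat -> nat,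
  (forall i, (phi i < phi i.+1)%N) /\ (forall i, (s (phi i) <= s (phi i.+1))%MM).
Proof.
suff /(_ l (leqnn l)) [phi [phi_lt phi_le]] : forall k, (k <= l)%N ->
    exists phi : nat -> nat, (forall i, (phi i < phi i.+1)%N) /\
    (forall i (c : 'I_l), (c < k)%N -> (s (phi i) c <= s (phi i.+1) c)%N).
  by exists phi; split=> // i; apply/mnm_lepP => c; apply: phi_le.
elim=> [|k IH] kl; first by exists id.
have [phi [phi_lt phi_le]] := IH (ltnW kl); pose ck : 'I_l := Ordinal kl.
have [psi [psi_lt psi_le]] := nat_monotone_subseq (fun i => s (phi i) ck).
have phi_homo := homo_ltn (@ltn_trans) phi_lt.
exists (phi \o psi); split=> [i|i c]; first exact: phi_homo.
rewrite ltnS leq_eqVlt => /orP [/eqP ck_eq|c_lt].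
  have -> : c = ck by exact: val_inj.
  exact: psi_le.
apply: (homo_leq (f := fun j => s (phi j) c) (r := leq)) (ltnW (psi_lt i)) => //.
  exact: leq_trans.
by move=> j; apply: phi_le.
Qed.

Variables (le : rel 'X_{1..l}) (Hle : is_term_order le).

(* A strictly descending chain would contain, by Dickson's lemma, some [s i]
   dividing [s j] with [i < j]. *)
Lemma tord_wf_ind (P : 'X_{1..l} -> Prop) :
  (forall m, (forall m', le m' m -> m' != m -> P m') -> P m) -> forall m, P m.
Proof.
move=> IH m0; apply: NNPP => nP0.
have step (x : {m | ~ P m}) : exists y : {m | ~ P m}, le (sval y) (sval x) /\ sval y != sval x.
  case: x => m nPm /=; apply: NNPP => nostep; apply/nPm/IH => m' le_m' ne_m'.
  by apply: NNPP => nPm'; apply: nostep; exists (exist _ m' nPm').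
have [nxt nxtP] := choice _ step; pose s i := sval (iter i nxt (exist _ m0 nP0)).
have desc i j : (i < j)%N -> le (s j) (s i) /\ s j != s i.
  elim: j => // j IH'; have [le1 ne1] := nxtP (iter j nxt (exist _ m0 nP0)).
  rewrite ltnS leq_eqVlt => /orP [/eqP <-|/IH' [le2 _]]; first exact: nxtP.
  split; first exact: (tord_trans Hle le1 le2).
  apply: contraNneq ne1 => E; apply/eqP/(tord_anti Hle le1).
  by change (le (s j) (s j.+1)); rewrite E.
have [phi [phi_lt phi_le]] := dickson s; have [le10 ne10] := desc _ _ (phi_lt 0%N).
by move/eqP: ne10; apply; apply: (tord_anti Hle le10 (tord_divides Hle (phi_le 0%N))).
Qed.

End Dickson.

(** * Minimal strong Groebner bases over [Z] *)

Section Ideal.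
Variables (l : nat) (gs : seq {mpoly int[l]}).
Implicit Types f g : {mpoly int[l]}.

Lemma in_idealP f : in_ideal gs f <->
  exists c : nat -> {mpoly int[l]}, f = \sum_(i < size gs) c i * gs`_i.
Proof.
split=> [[cs [_ ->]]|[c ->]]; first by exists (nth 0 cs).
exists (mkseq c (size gs)); rewrite size_mkseq; split=> //.
by apply: eq_bigr => i _; rewrite nth_mkseq.
Qed.

Lemma in_ideal0 : in_ideal gs 0.
Proof. by apply/in_idealP; exists (fun=> 0); rewrite big1 // => i _; rewrite mul0r. Qed.

Lemma in_idealD f g : in_ideal gs f -> in_ideal gs g -> in_ideal gs (f + g).
Proof.
move=> /in_idealP [c1 ->] /in_idealP [c2 ->]; apply/in_idealP.
by exists (fun i => c1 i + c2 i); rewrite -big_split; apply: eq_bigr => i _; rewrite mulrDl.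
Qed.

Lemma in_idealMl h f : in_ideal gs f -> in_ideal gs (h * f).
Proof.
move=> /in_idealP [c ->]; apply/in_idealP; exists (fun i => h * c i).
by rewrite mulr_sumr; apply: eq_bigr => i _; rewrite mulrA.
Qed.

Lemma in_idealB f g : in_ideal gs f -> in_ideal gs g -> in_ideal gs (f - g).
Proof. by move=> If Ig; rewrite -mulN1r; apply/in_idealD/in_idealMl. Qed.

Lemma in_idealZ a f : in_ideal gs f -> in_ideal gs (a *: f).
Proof. by rewrite -mul_mpolyC; apply: in_idealMl. Qed.

Lemma in_ideal_mem g : g \in gs -> in_ideal gs g.
Proof.
move=> gs_g; apply/in_idealP; pose k := Ordinal (etrans (index_mem g gs) gs_g).
exists (fun i => (i == index g gs)%:R).
rewrite (bigD1 k) //= eqxx mul1r nth_index // big1 ?addr0 // => i.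
by rewrite -val_eqE /= => /negbTE ->; rewrite mul0r.
Qed.

End Ideal.

Lemma in_ideal_subset l (gs hs : seq {mpoly int[l]}) :
  (forall h, h \in hs -> in_ideal gs h) -> forall f, in_ideal hs f -> in_ideal gs f.
Proof.
move=> sub f /in_idealP [c ->]; elim/big_ind: _ => [|f1 f2|i _].
- exact: in_ideal0.
- exact: in_idealD.
- exact/in_idealMl/sub/mem_nth.
Qed.

Lemma absz_dvd_leq (a b : int) : b != 0 -> (a %| b)%Z -> (`|a| <= `|b|)%N.
Proof. by rewrite -absz_gt0 dvdzE => b0 /dvdn_leq; apply. Qed.

Lemma absz_dvd_ltn (a b : int) : b != 0 -> (a %| b)%Z -> ~~ (b %| a)%Z -> (`|a| < `|b|)%N.
Proof.
move=> b0 ab nba; rewrite ltn_neqAle absz_dvd_leq // andbT.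
by apply: contraNneq nba => E; rewrite dvdzE E.
Qed.

Section GroebnerBasis.
Variables (l : nat) (le : rel 'X_{1..l}) (gs : seq {mpoly int[l]}).
Hypothesis Hle : is_term_order le.
Local Notation I := (in_ideal gs).
Implicit Types (c : int) (m : 'X_{1..l}) (f g : {mpoly int[l]}).

Definition lead_term c m :=
  exists2 f, I f & [/\ f != 0, lead_mnm le f = m & lead_cf le f = c].

(* The only leading terms dividing a minimal one are its associates; one ideal
   element for each minimal leading monomial is a minimal strong Groebner basis. *)
Definition min_lead_term c m := lead_term c m /\
  forall c' m', lead_term c' m' -> (c' %| c)%Z -> (m' <= m)%MM -> m' = m /\ (c %| c')%Z.

Lemma lead_term_neq0 c m : lead_term c m -> c != 0.
Proof. by case=> f _ [nz _ <-]; rewrite (lead_cf_eq0 Hle). Qed.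

Lemma lead_termMX c m u : lead_term c m -> lead_term c (u + m)%MM.
Proof.
case=> f If [nz <- <-]; exists (f * 'X_[u]); first by rewrite mulrC; apply: in_idealMl.
have nzX : f * 'X_[u] != 0 by rewrite -(lead_cf_eq0 Hle) lead_cfMX // (lead_cf_eq0 Hle).
by split; rewrite ?lead_mnmMX ?lead_cfMX.
Qed.

Lemma min_lead_term_dvd c m c' : min_lead_term c m -> lead_term c' m -> (c %| c')%Z.
Proof.
case=> [[f If [nzf lf cf]] cmin] [f' If' [nzf' lf' cf']].
have [u [v Euv]] := Bezoutz c c'.
pose h := u *: f + v *: f'.
have h_m : h@_m = gcdz c c' by rewrite mcoeffD !mcoeffZ -Euv -cf -cf' /lead_cf lf lf'.
have h_supp : m \in msupp h.
  by rewrite mcoeff_msupp h_m gcdz_eq0 negb_and -cf (lead_cf_eq0 Hle) nzf.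
have nzh : h != 0 by apply: contraTneq h_supp => ->; rewrite msupp0.
have lh : lead_mnm le h = m.
  apply: (lead_mnm_eq Hle) => // m' /msuppD_le; rewrite mem_cat.
  by case/orP=> /msuppZ_le /(lead_mnm_ub Hle); rewrite ?lf ?lf'.
have Tg : lead_term (gcdz c c') m.
  exists h; first exact/in_idealD/in_idealZ/If'/in_idealZ.
  by split; rewrite // /lead_cf lh h_m.
have [_ /dvdz_trans] := cmin _ _ Tg (dvdz_gcdl _ _) (lepm_refl _); apply.
exact: dvdz_gcdr.
Qed.

Lemma exists_min_lead_term c m : lead_term c m ->
  exists c' m', [/\ min_lead_term c' m', (c' %| c)%Z & (m' <= m)%MM].
Proof.
have [N leN] := ubnP (`|c| + mdeg m); elim: N => // N IH in c m leN *; move=> T.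
case: (classic (min_lead_term c m)) => [cm|ncm].
  by exists c, m; rewrite dvdzz lepm_refl.
have [c' [m' [T' c'c m'm nle]]] : exists c' m',
    [/\ lead_term c' m', (c' %| c)%Z, (m' <= m)%MM & ~ (m' = m /\ (c %| c')%Z)].
  apply: NNPP => none; apply: ncm; split=> // c' m' T' c'c m'm.
  by apply: NNPP => nle; apply: none; exists c', m'.
have c0 := lead_term_neq0 T.
have lt_measure : (`|c'| + mdeg m' < `|c| + mdeg m)%N.
  have [E|ne] := eqVneq m' m.
    rewrite E ltn_add2r absz_dvd_ltn //; apply/negP => cc'; exact: nle.
  rewrite -addnS leq_add ?absz_dvd_leq // -(submK m'm) mdegD addnC.
  rewrite -{1}[mdeg m']addn0 ltn_add2l lt0n mdeg_eq0.
  by apply: contra_neq ne => E; rewrite -(submK m'm) E add0m.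
have [c'' [m'' [cm c''c' m''m']]] := IH _ _ (leq_trans lt_measure leN) T'.
by exists c'', m''; split; [|exact: dvdz_trans c''c' c'c|exact: lepm_trans m''m' m'm].
Qed.

Lemma min_lead_term_ltn c1 m1 c2 m2 : min_lead_term c1 m1 -> min_lead_term c2 m2 ->
  (m1 <= m2)%MM -> m1 != m2 -> (`|c2| < `|c1|)%N.
Proof.
move=> [T1 _] [T2 cmin2] m12 ne12.
have T12 : lead_term c1 m2 by rewrite -(submK m12); apply: lead_termMX.
apply: absz_dvd_ltn (lead_term_neq0 T1) (min_lead_term_dvd (conj T2 cmin2) T12) _.
by apply/negP => c12; have [E _] := cmin2 _ _ T1 c12 m12; rewrite E eqxx in ne12.
Qed.

(* Otherwise Dickson's lemma yields a divisibility chain of minimal monomials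
   along which the coefficients strictly decrease in absolute value. *)
Lemma min_lead_term_bounded : exists N, forall c m, min_lead_term c m -> (mdeg m < N)%N.
Proof.
apply: NNPP => unbounded.
have big_deg N : exists x : int * 'X_{1..l}, min_lead_term x.1 x.2 /\ (N <= mdeg x.2)%N.
  apply: NNPP => none; apply: unbounded; exists N => c m cm.
  by rewrite ltnNge; apply/negP => Nm; apply: none; exists (c, m).
have [nxt nxtP] := choice _ big_deg.
pose x i := iter i (fun y => nxt (mdeg y.2).+1) (nxt 0%N).
have x_min i : min_lead_term (x i).1 (x i).2
  by case: i => [|i]; [case: (nxtP 0%N)|case: (nxtP (mdeg (x i).2).+1)].
have x_deg i : (mdeg (x i).2 < mdeg (x i.+1).2)%N by case: (nxtP (mdeg (x i).2).+1).
have [phi [phi_lt phi_le]] := dickson (fun i => (x i).2).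
have x_deg_homo := homo_ltn (f := fun i => mdeg (x i).2) (@ltn_trans) x_deg.
have dec i : (`|(x (phi i.+1)).1| < `|(x (phi i)).1|)%N.
  apply: min_lead_term_ltn (x_min _) (x_min _) (phi_le i) _.
  by apply: contraTneq (x_deg_homo _ _ (phi_lt i)) => ->; rewrite ltnn.
have bound i : (`|(x (phi i)).1| + i <= `|(x (phi 0%N)).1|)%N.
  by elim: i => [|i IH]; rewrite ?addn0 // addnS (leq_trans _ IH) // ltn_add2r.
by have := bound (`|(x (phi 0%N)).1|.+1); rewrite addnS ltnNge leq_addl.
Qed.

Lemma lead_dvd_in_ideal (G : seq {mpoly int[l]}) :
    (forall g, g \in G -> I g) ->
    (forall f, I f -> f != 0 -> exists2 g, g \in G & LM_dvd le g f) ->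
  forall f, I f -> in_ideal G f.
Proof.
move=> GI Gdvd f If; have [->|nz] := eqVneq f 0; first exact: in_ideal0.
move E : (lead_mnm le f) => m; elim/(tord_wf_ind Hle): m f E If nz => m IH f lf If nz.
have [g Gg /andP [dc dm]] := Gdvd f If nz.
have nzg : g != 0.
  by apply: contraTneq dc => ->; rewrite /lead_cf mcoeff0 dvd0z (lead_cf_eq0 Hle).
have [a Ea] := dvdzP dc.
pose u := (lead_mnm le f - lead_mnm le g)%MM.
have Eu : (u + lead_mnm le g)%MM = lead_mnm le f by rewrite /u submK.
pose h := a *: (g * 'X_[u]).
have Gh : in_ideal G h by apply/in_idealZ; rewrite mulrC; apply/in_idealMl/in_ideal_mem.
have Ih : I h by apply/in_idealZ; rewrite mulrC; apply/in_idealMl/GI.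
rewrite -(subrK h f); apply: in_idealD Gh.
have [->|nz'] := eqVneq (f - h) 0; first exact: in_ideal0.
have supp_fh := lead_mnm_supp Hle nz'.
have le_m : le (lead_mnm le (f - h)) m.
  move: supp_fh => /msuppB_le; rewrite mem_cat => /orP [|/msuppZ_le] /(lead_mnm_ub Hle).
    by rewrite lf.
  by rewrite lead_mnmMX // Eu lf.
have ne_m : lead_mnm le (f - h) != m.
  apply: contraTneq supp_fh => ->; rewrite mcoeff_msupp negbK mcoeffB mcoeffZ.
  by rewrite -lf -{2}Eu mcoeffMX -/(lead_cf le f) -/(lead_cf le g) Ea subrr.
exact: IH _ le_m ne_m (f - h) erefl (in_idealB If Ih) nz'.
Qed.

Lemma min_lead_term_family : exists G : seq {mpoly int[l]},
  [/\ uniq (map (lead_mnm le) G),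
      forall g, g \in G -> [/\ I g, g != 0 & min_lead_term (lead_cf le g) (lead_mnm le g)]
    & forall c m, min_lead_term c m -> exists2 g, g \in G & lead_mnm le g = m].
Proof.
have [N degN] := min_lead_term_bounded.
pose is_min (b : 'X_{1..l < N}) := exists c, min_lead_term c b.
have [isMin isMinP] : exists isMin : 'X_{1..l < N} -> bool, forall b, isMin b <-> is_min b.
  apply: (choice (fun b (x : bool) => x <-> is_min b)) => b.
  by case: (classic (is_min b)) => h; [exists true | exists false]; split=> // /h.
have [gen genP] : exists gen : 'X_{1..l < N} -> {mpoly int[l]}, forall b, is_min b ->
    [/\ I (gen b), gen b != 0, lead_mnm le (gen b) = b & min_lead_term (lead_cf le (gen b)) b].
  apply: (choice (fun b g => is_min b ->
    [/\ I g, g != 0, lead_mnm le g = b & min_lead_term (lead_cf le g) b])) => b.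
  case: (classic (is_min b)) => [[c cm]|nm]; last by exists 0.
  by case: (cm) => [[f If [nz lf cf]] _]; exists f => _; rewrite cf.
exists (map gen (enum isMin)); split.
- have -> : map (lead_mnm le) (map gen (enum isMin)) = map val (enum isMin).
    by rewrite -map_comp; apply/eq_in_map => b; rewrite mem_enum => /isMinP /genP [].
  by rewrite map_inj_uniq ?enum_uniq //; apply: val_inj.
- move=> g /mapP [b]; rewrite mem_enum => /isMinP /genP [Ig nz lg cm] ->.
  by rewrite lg.
- move=> c m cm; pose b := BMultinom (degN _ _ cm).
  have [_ _ lg _] := genP b (ex_intro _ c cm).
  by exists (gen b); rewrite // map_f // mem_enum; apply/isMinP; exists c.
Qed.

Lemma min_strong_GB_exists : exists G, min_strong_GB le I G.
Proof.
have [G [uniqG Gspec Gmin]] := min_lead_term_family.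
have Gdvd f : I f -> f != 0 -> exists2 g, g \in G & LM_dvd le g f.
  move=> If nz; have Tf : lead_term (lead_cf le f) (lead_mnm le f) by exists f.
  have [c' [m' [cm c'f m'f]]] := exists_min_lead_term Tf.
  have [g Gg lg] := Gmin _ _ cm; have [_ _ cmg] := Gspec g Gg.
  exists g; rewrite // /LM_dvd lg m'f andbT (dvdz_trans _ c'f) //.
  by apply: min_lead_term_dvd _ (proj1 cm); rewrite -lg.
exists G; split=> [g /Gspec [] //|f|//|i j ilt jlt ij].
  split; first by apply: lead_dvd_in_ideal => // g /Gspec [].
  by apply: in_ideal_subset => g /Gspec [].
have [Ii nzi _] := Gspec _ (mem_nth 0 ilt); have [_ _ [_ cminj]] := Gspec _ (mem_nth 0 jlt).
apply/negP => /andP [dc dm].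
have Ti : lead_term (lead_cf le G`_i) (lead_mnm le G`_i) by exists G`_i.
have [E _] := cminj _ _ Ti dc dm.
have := nth_uniq (lead_mnm le 0) _ _ uniqG; rewrite size_map => /(_ i j ilt jlt).
by rewrite !(nth_map 0) // E eqxx (negbTE ij).
Qed.

End GroebnerBasis.

(** * Lucky primes and determinants of linear forms *)

Lemma row_free_triangular (F : fieldType) n (T : 'M[F]_n) (R : rel 'I_n) :
    total R -> transitive R ->
    (forall j, T j j != 0) -> (forall j k, R j k -> k != j -> T j k = 0) ->
  row_free T.
Proof.
move=> Rtot Rtrans diag tri; apply: inj_row_free => v vT0; apply/rowP => x.
rewrite mxE; apply/eqP; apply: contraT => vx.
pose J := [seq j <- enum 'I_n | v 0 j != 0].
have xJ : x \in J by rewrite mem_filter vx mem_enum.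
pose j0 := foldr_max R x J.
have j0J : j0 \in J by have := foldr_max_mem R x J; rewrite -/j0 inE => /orP [/eqP ->|].
have := congr1 (fun w : 'rV[F]_n => w 0 j0) vT0; rewrite !mxE (bigD1 j0) //= big1.
  rewrite addr0 => /eqP; rewrite mulf_eq0 (negbTE (diag j0)) orbF.
  by move: j0J; rewrite mem_filter => /andP [/negbTE ->].
move=> j j_ne; have [->|vj] := eqVneq (v 0 j) 0; first by rewrite mul0r.
rewrite tri ?mulr0 // 1?eq_sym //.
by apply: foldr_max_ub => //; rewrite mem_filter vj mem_enum.
Qed.

Lemma lepm1 l (m : 'X_{1..l}) j : (m <= U_(j))%MM -> m = 0%MM \/ m = U_(j)%MM.
Proof.
move/mnm_lepP => m_le; have [mj0|mj] := eqVneq (m j) 0%N; [left|right].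
  apply/mnmP => k; rewrite mnm0E; have := m_le k; rewrite mnm1E.
  by case: eqP => [<-|_] //; rewrite leqn0 => /eqP.
apply/mnmP => k; rewrite mnm1E; have := m_le k; rewrite mnm1E.
case: eqP => [<-|_]; last by rewrite leqn0 => /eqP.
by move: mj; case: (m j) => [|[|]].
Qed.

Section RowForms.
Variable l : nat.

Definition mpoly_of_row (v : 'rV[int]_l) : {mpoly int[l]} := \sum_(j < l) v 0 j *: 'X_j.

Definition row_forms m (M : 'M[int]_(m, l)) : seq {mpoly int[l]} :=
  [seq mpoly_of_row (row a M) | a <- enum 'I_m].

Lemma mcoeff0_mul_mpoly_of_row (c : {mpoly int[l]}) v : (c * mpoly_of_row v)@_0%MM = 0.
Proof.
rewrite /mpoly_of_row mulr_sumr raddf_sum big1 // => j _ /=.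
by rewrite -scalerAr mcoeffZ mcoeffMX_le lep1mP mnm0E eqxx mulr0.
Qed.

Lemma mcoeffU_mul_mpoly_of_row (c : {mpoly int[l]}) v k :
  (c * mpoly_of_row v)@_U_(k) = c@_0%MM * v 0 k.
Proof.
rewrite /mpoly_of_row mulr_sumr raddf_sum (bigD1 k) //= big1 ?addr0 => [|j jk] /=.
  by rewrite -scalerAr mcoeffZ -{1}[U_(k)%MM]addm0 mcoeffMX mulrC.
by rewrite -scalerAr mcoeffZ mcoeffMX_le lep1mP mnm1E [k == j]eq_sym (negbTE jk) mulr0.
Qed.

Lemma row_forms_mcoeff m (M : 'M[int]_(m, l)) f : in_ideal (row_forms M) f ->
  exists w : 'rV[int]_m, f@_0%MM = 0 /\ forall k, f@_U_(k) = (w *m M) 0 k.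
Proof.
case/in_idealP => c ->; exists (\row_a (c a)@_0%MM).
rewrite -(big_mkord (fun=> true) (fun i => c i * (row_forms M)`_i)).
rewrite size_map size_enum_ord big_mkord.
have nthE (a : 'I_m) : (row_forms M)`_a = mpoly_of_row (row a M).
  by rewrite (nth_map a) ?size_enum_ord // nth_ord_enum.
split=> [|k]; rewrite raddf_sum /=.
  by apply: big1 => a _; rewrite nthE mcoeff0_mul_mpoly_of_row.
by rewrite mxE; apply: eq_bigr => a _; rewrite nthE mcoeffU_mul_mpoly_of_row !mxE.
Qed.

Lemma det_scaleX_in_ideal (M : 'M[int]_l) j : in_ideal (row_forms M) (\det M *: 'X_j).
Proof.
have -> : \det M *: 'X_j = \sum_a (\adj M) j a *: mpoly_of_row (row a M).
  transitivity (\sum_k (\adj M *m M) j k *: ('X_k : {mpoly int[l]})).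
    rewrite mul_adj_mx (bigD1 j) //= big1 ?addr0 => [|k kj]; rewrite mxE ?eqxx //.
    by rewrite eq_sym (negbTE kj) mulr0n scale0r.
  under [RHS]eq_bigr => a _ do rewrite /mpoly_of_row scaler_sumr.
  rewrite exchange_big; apply: eq_bigr => k _; rewrite mxE scaler_suml.
  by apply: eq_bigr => a _; rewrite scalerA !mxE.
elim/big_ind: _ => [|f g|a _]; [exact: in_ideal0|exact: in_idealD|].
exact/in_idealZ/in_ideal_mem/map_f/mem_enum.
Qed.

Variables (le : rel 'X_{1..l}) (Hle : is_term_order le).

Lemma lucky_row_triangular p (M : 'M[int]_l) (j : 'I_l) :
    sigma_lucky le (in_ideal (row_forms M)) p -> \det M != 0 ->
  exists w : 'rV[int]_l, ~~ (p%:Z %| (w *m M) ord0 j)%Z /\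
    forall k, le U_(j)%MM U_(k)%MM -> k != j -> (w *m M) 0 k = 0.
Proof.
move=> lucky detM0; have [G GB] := min_strong_GB_exists (row_forms M) Hle.
case: (GB) => GI _ Gdvd _.
pose fj : {mpoly int[l]} := \det M *: 'X_j.
have supp_fj : msupp fj = [:: U_(j)%MM] by rewrite msuppMCX.
have nz_fj : fj != 0 by rewrite -msupp_eq0 supp_fj.
have lead_fj : lead_mnm le fj = U_(j)%MM.
  apply: (lead_mnm_eq Hle) => [|m]; rewrite supp_fj inE // => /eqP ->.
  exact: tord_refl.
have [g Gg /andP [_ g_le]] := Gdvd _ (det_scaleX_in_ideal M j) nz_fj.
have [nzg Ig] := GI g Gg; have [w [g0 gU]] := row_forms_mcoeff Ig.
have lead_g : lead_mnm le g = U_(j)%MM.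
  have := lead_mnm_supp Hle nzg; rewrite lead_fj in g_le.
  by case: (lepm1 g_le) => ->; rewrite // mcoeff_msupp g0 eqxx.
exists w; split; first by rewrite -gU -lead_g; apply: lucky G GB g Gg.
move=> k jk kj; rewrite -gU; apply/eqP; rewrite mcoeff_eq0; apply/negP.
move=> /(lead_mnm_ub Hle); rewrite lead_g => kj'.
by move: kj; rewrite -eq_mnm1 (tord_anti Hle kj' jk) eqxx.
Qed.

Lemma lucky_det_coprime p (M : 'M[int]_l) : prime p ->
    sigma_lucky le (in_ideal (row_forms M)) p -> \det M != 0 ->
  ~~ (p%:Z %| \det M)%Z.
Proof.
move=> p_pr lucky detM0.
have [W HW] := choice _ (fun j => lucky_row_triangular j lucky detM0).
pose WM := (\matrix_j W j) *m M.
have WME j k : WM j k = (W j *m M) 0 k by rewrite !mxE; apply: eq_bigr => a _; rewrite !mxE.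
have modp (z : int) : (z%:~R == 0 :> 'F_p) = (p%:Z %| z)%Z := esym (dvdz_pcharf (pchar_Fp p_pr) z).
have : row_free (map_mx (fun z : int => z%:~R : 'F_p) WM).
  apply: (@row_free_triangular _ _ _ (fun j k => le U_(j)%MM U_(k)%MM)) => [j k|j k m|j|j k jk kj].
  - exact: tord_total.
  - exact: tord_trans.
  - by rewrite mxE modp WME; case: (HW j).
  - by rewrite mxE WME; case: (HW j) => _ ->.
rewrite row_free_unit unitmxE unitfE det_map_mx modp /WM det_mulmx.
by apply: contra => /dvdz_mull ->.
Qed.

End RowForms.

(** * Ranks of subarrangements over [Q] and over [F_q] *)

Section Arrangement.
Variables (l n : nat) (alpha : 'I_n -> 'rV[int]_l).

(* Rows outside [B] are zero, so that all subarrangements share the shape [n x l]. *)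
Definition form_mx (K : fieldType) (B : {set 'I_n}) : 'M[K]_(n, l) :=
  \matrix_(i, j) if i \in B then (alpha i 0 j)%:~R else 0.

Definition indep (K : fieldType) (B : {set 'I_n}) := \rank (form_mx K B) == #|B|.

Section OverField.
Variable K : fieldType.
Local Notation A := (form_mx K).
Implicit Types B C D T : {set 'I_n}.

Lemma row_form_mx B i : row i (A B) = if i \in B then row i (A setT) else 0.
Proof. by apply/rowP => j; case: ifP => iB; rewrite !mxE ?inE ?iB. Qed.

Lemma row_form_mx_sub B i : i \in B -> (row i (A setT) <= A B)%MS.
Proof. by move=> iB; have := row_sub i (A B); rewrite row_form_mx iB. Qed.

Lemma form_mx_subset B C : B \subset C -> (A B <= A C)%MS.
Proof.
move=> BC; apply/row_subP => i; rewrite row_form_mx.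
by case: ifP => iB; [apply/row_form_mx_sub/(subsetP BC)|apply: sub0mx].
Qed.

Lemma form_mx_setU1 B i : (A (i |: B) <= A B + row i (A setT))%MS.
Proof.
apply/row_subP => x; rewrite row_form_mx in_setU1.
have [->|_] := eqVneq x i; first exact: addsmxSr.
by case: ifP => xB; [apply/(submx_trans _ (addsmxSl _ _))/row_form_mx_sub|apply: sub0mx].
Qed.

Lemma rank_form_mx_setU1 B i : (\rank (A (i |: B)) <= (\rank (A B)).+1)%N.
Proof.
apply: leq_trans (mxrankS (form_mx_setU1 B i)) _.
apply: leq_trans (mxrank_adds_leqif _ _) _.
by rewrite -[(\rank (A B)).+1]addn1 leq_add2l rank_leq_row.
Qed.

Lemma rank_form_mx_setU1_eq B i : ~~ (row i (A setT) <= A B)%MS ->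
  \rank (A (i |: B)) = (\rank (A B)).+1.
Proof.
move=> iB; apply/eqP; rewrite eqn_leq rank_form_mx_setU1 /=.
have [le_rk eq_rk] := mxrank_leqif_sup (form_mx_subset (subsetUr [set i] B)).
rewrite ltn_neqAle le_rk andbT eq_rk; apply: contra iB; apply: submx_trans.
by apply: row_form_mx_sub; rewrite setU11.
Qed.

Lemma rank_form_mx_setU B D : (\rank (A (B :|: D)) <= \rank (A B) + #|D|)%N.
Proof.
have [k cardD] : exists k, #|D| = k by eexists.
rewrite cardD; elim: k D cardD => [|k IH] D cardD.
  by move/eqP: cardD; rewrite cards_eq0 => /eqP ->; rewrite setU0 addn0.
have [i iD] : exists i, i \in D by apply/set0Pn; rewrite -card_gt0 cardD.
have cardD' : #|D :\ i| = k by move: cardD; rewrite (cardsD1 i D) iD add1n => [[]].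
rewrite -(setD1K iD) setUCA addnS.
by apply: leq_trans (rank_form_mx_setU1 _ _) _; rewrite ltnS IH.
Qed.

Lemma form_mx0 : A set0 = 0.
Proof. by apply/matrixP => i j; rewrite !mxE inE. Qed.

Lemma rank_form_mx_card B : (\rank (A B) <= #|B|)%N.
Proof. by have := rank_form_mx_setU set0 B; rewrite set0U form_mx0 mxrank0. Qed.

Lemma indep_set0 : indep K set0.
Proof. by rewrite /indep cards0 form_mx0 mxrank0. Qed.

Lemma indep_subset T T' : T' \subset T -> indep K T -> indep K T'.
Proof.
move=> T'T /eqP rkT; rewrite /indep eqn_leq rank_form_mx_card /=.
have TE : T' :|: T :\: T' = T.
  by apply/setP => x; rewrite !inE; case: (boolP (x \in T')) => //= /(subsetP T'T) ->.
have := rank_form_mx_setU T' (T :\: T'); rewrite TE rkT cardsDS //.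
by move=> h; rewrite -(leq_add2r (#|T| - #|T'|)) subnKC ?subset_leq_card.
Qed.

Lemma indep_extend B0 C : B0 \subset C -> indep K B0 ->
  exists T, [/\ B0 \subset T, T \subset C, indep K T & \rank (A T) = \rank (A C)].
Proof.
move=> B0C iB0; pose P T := [&& B0 \subset T, T \subset C & indep K T].
have PB0 : P B0 by rewrite /P subxx B0C.
case: (arg_maxnP (fun T => #|T|) PB0) => T /and3P [B0T TC indT] Tmax.
exists T; split=> //; apply/eqP; rewrite eqn_leq mxrankS ?form_mx_subset //=.
apply/mxrankS/row_subP => i; rewrite row_form_mx; case: ifP => iC; last exact: sub0mx.
apply: contraT => iT'; have iT : i \notin T by apply: contra iT' => /row_form_mx_sub.
suff /Tmax : P (i |: T) by rewrite /= cardsU1 iT add1n ltnn.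
rewrite /P (subset_trans B0T (subsetUr _ _)) subUset sub1set iC TC /=.
by rewrite /indep rank_form_mx_setU1_eq // cardsU1 iT (eqP indT).
Qed.

Lemma indep_extend_card T : \rank (A setT) = l -> indep K T ->
  exists2 S : {set 'I_n}, T \subset S & #|S| = l /\ indep K S.
Proof.
move=> fullK iT; have [S [TS _ iS rS]] := indep_extend (subsetT T) iT.
by exists S => //; rewrite -(eqP iS) rS fullK.
Qed.

End OverField.

Implicit Types (B S T : {set 'I_n}).

Lemma rank_form_mx_le (K1 K2 : fieldType) B : (forall T, indep K1 T -> indep K2 T) ->
  (\rank (form_mx K1 B) <= \rank (form_mx K2 B))%N.
Proof.
move=> K12; have [T [_ TB iT <-]] := indep_extend (sub0set B) (indep_set0 K1).
by rewrite (eqP iT) -(eqP (K12 T iT)) mxrankS ?form_mx_subset.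
Qed.

(* Padded with zero rows when [#|S| < l]. *)
Definition form_sqmx (S : {set 'I_n}) : 'M[int]_l := \matrix_(a < l) (map alpha (enum S))`_a.

Lemma rank_form_sqmx (K : fieldType) S : #|S| = l ->
  \rank (form_mx K S) = \rank (map_mx (fun z : int => z%:~R : K) (form_sqmx S)).
Proof.
move=> cS; apply/eqmx_rank/andP; split; apply/row_subP => x.
  rewrite row_form_mx; case: ifP => xS; last exact: sub0mx.
  have xl : (index x (enum S) < l)%N by rewrite -cS cardE index_mem mem_enum.
  rewrite (_ : row x _ = row (Ordinal xl) (map_mx (fun z : int => z%:~R : K) (form_sqmx S))).
    exact: row_sub.
  by apply/rowP => j; rewrite !mxE inE (nth_map x) ?nth_index ?index_mem ?mem_enum.
pose i := enum_val (cast_ord (esym cS) x).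
rewrite (_ : row x _ = row i (form_mx K S)) ?row_sub //.
apply/rowP => j; rewrite !mxE enum_valP (nth_map i) -?cardE ?cS //.
by rewrite {2}/i (enum_val_nth i).
Qed.

Lemma indep_form_sqmx (K : fieldType) S : #|S| = l ->
  indep K S = ((\det (form_sqmx S))%:~R != 0 :> K).
Proof.
move=> cS; rewrite /indep rank_form_sqmx // cS.
by rewrite -[_ == l]/(row_free _) row_free_unit unitmxE unitfE det_map_mx.
Qed.

Lemma row_forms_form_sqmx S : #|S| = l ->
  row_forms (form_sqmx S) = [seq lin_form alpha i | i <- enum S].
Proof.
move=> cS; rewrite /row_forms; apply: (@eq_from_nth _ 0) => [|a].
  by rewrite !size_map -enumT size_enum_ord -cardE cS.
rewrite size_map ?size_enum_ord -?enumT ?size_enum_ord => al.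
pose i := enum_val (cast_ord (esym cS) (Ordinal al)).
rewrite (nth_map (Ordinal al)) ?size_enum_ord -?enumT ?size_enum_ord //.
rewrite (nth_map i) -?cardE ?cS // (nth_ord_enum _ (Ordinal al)).
by rewrite rowK (nth_map i) // -cardE cS.
Qed.

Lemma sub_bigcap_hyp m (X : 'M[rat]_(m, l)) B :
  (X <= \bigcap_(i in B) hyp alpha i)%MS = (X <= kermx (form_mx rat B)^T)%MS.
Proof.
apply/sub_bigcapmxP/idP => [XB|]; rewrite sub_kermx.
  apply/eqP/matrixP => x i; rewrite !mxE; case: (boolP (i \in B)) => iB; last first.
    by rewrite big1 // => j _; rewrite !mxE (negbTE iB) mulr0.
  have := XB i iB; rewrite /hyp sub_kermx => /eqP/matrixP/(_ x ord0).
  rewrite !mxE => E; rewrite -[RHS]E.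
  by apply: eq_bigr => j _; rewrite !mxE iB.
move=> /eqP/matrixP XB i iB; rewrite /hyp sub_kermx; apply/eqP/matrixP => x y.
have := XB x i; rewrite !mxE (ord1 y) => E; rewrite -[RHS]E.
by apply: eq_bigr => j _; rewrite !mxE iB.
Qed.

Lemma rk_rank B : rk alpha B = \rank (form_mx rat B).
Proof.
have capE : (\bigcap_(i in B) hyp alpha i :=: kermx (form_mx rat B)^T)%MS.
  by apply/eqmxP/andP; split; rewrite ?sub_bigcap_hyp // -sub_bigcap_hyp.
by rewrite /rk capE mxrank_ker mxrank_tr subKn // rank_leq_col.
Qed.

Section CharP.
Variables (le : rel 'X_{1..l}) (p : nat) (F : fieldType).
Hypotheses (Hle : is_term_order le) (Hp : prime p) (lucky : lucky_prime alpha le p).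
Hypothesis charF : forall z : int, (z%:~R == 0 :> F) = (p%:Z %| z)%Z.
Hypothesis full : \rank (form_mx rat setT) = l.

Lemma indep_rat_charp T : indep rat T -> indep F T.
Proof.
move=> iT; have [S TS [cS iS]] := indep_extend_card full iT; apply: indep_subset TS _.
have rkS : rk alpha S = l by rewrite rk_rank (eqP iS) cS.
move: iS; rewrite !indep_form_sqmx // intr_eq0 charF => detS.
apply: (lucky_det_coprime (M := form_sqmx S) Hle Hp) detS.
by rewrite row_forms_form_sqmx //; apply: lucky.
Qed.

Lemma rank_form_mx_charp B : \rank (form_mx F B) = \rank (form_mx rat B).
Proof.
have fullF : \rank (form_mx F setT) = l.
  by apply/eqP; rewrite eqn_leq rank_leq_col -{1}full rank_form_mx_le //; apply: indep_rat_charp.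
have indep_charp_rat T : indep F T -> indep rat T.
  move=> iT; have [S TS [cS iS]] := indep_extend_card fullF iT; apply: indep_subset TS _.
  by move: iS; rewrite !indep_form_sqmx // charF intr_eq0; apply: contra => /eqP ->.
by apply/eqP; rewrite eqn_leq !rank_form_mx_le //; apply: indep_rat_charp.
Qed.

End CharP.

Definition zero_set (F : finFieldType) (P : 'rV[F]_l) : {set 'I_n} :=
  [set i : 'I_n | \sum_(j < l) red alpha F i ord0 j * P ord0 j == 0].

Lemma card_common_zeros (F : finFieldType) B :
  #|[set P : 'rV[F]_l | B \subset zero_set P]| = (#|F| ^ (l - \rank (form_mx F B)))%N.
Proof.
rewrite -mxrank_tr -mxrank_ker -card_rowg; apply: eq_card => P.
rewrite inE mem_rowg sub_kermx; apply/subsetP/eqP => [PB|/matrixP PB i iB].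
  apply/matrixP => x i; rewrite (ord1 x) !mxE; case: (boolP (i \in B)) => iB; last first.
    by rewrite big1 // => j _; rewrite !mxE (negbTE iB) mulr0.
  have := PB i iB; rewrite inE => /eqP E; rewrite -[RHS]E.
  by apply: eq_bigr => j _; rewrite !mxE iB mulrC.
rewrite inE; apply/eqP; have := PB ord0 i; rewrite !mxE => E; rewrite -[RHS]E.
by apply: eq_bigr => j _; rewrite !mxE iB mulrC.
Qed.

Lemma coboundary_atE q : coboundary_at alpha q =
  \sum_(B : {set 'I_n}) ('X - 1) ^+ #|B| *+ (q ^ (rk alpha setT - rk alpha B)).
Proof.
rewrite /coboundary_at /coboundary.
rewrite (_ : (fun c : {poly int} => c.[q%:R]) = horner_eval q%:R) // rmorph_sum /=.
apply: eq_bigr => B _; rewrite rmorphM /= map_polyC /= !rmorphXn rmorphB /= map_polyX.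
by rewrite rmorph1 /horner_eval hornerX -polyC_exp -natrX polyC_natr mulrC mulr_natr.
Qed.

End Arrangement.

Lemma exprD1_subsets (R : comPzRingType) (I : finType) (x : R) (A : {set I}) :
  (x + 1) ^+ #|A| = \sum_(B : {set I} | B \subset A) x ^+ #|B|.
Proof.
rewrite -prodr_const big_mkcond /=.
rewrite (eq_bigr (fun i => (if i \in A then x else 0) + 1)); last first.
  by move=> i _; case: (i \in A); rewrite ?add0r.
rewrite bigA_distr [RHS]big_mkcond /=; apply: eq_bigr => J _; rewrite -big_mkcond /=.
case: (boolP (J \subset A)) => [JA|/subsetPn [i iJ iA]].
  by rewrite -prodr_const; apply: eq_bigr => i iJ; rewrite (subsetP JA i iJ).
by rewrite (bigD1 i) //= (negbTE iA) mul0r.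
Qed.

Theorem theorem4p17 (l n : nat) (alpha : 'I_n -> 'rV[int]_l)
  (* each alpha_i is nonzero with coefficients not all divisible by any prime *)
  (Hprim : forall (i : 'I_n) (r : nat), prime r -> exists j : 'I_l, ~~ (r%:Z %| alpha i ord0 j)%Z)
  (* the hyperplanes are distinct *)
  (Hdist : forall i j : 'I_n, i != j -> ~~ (hyp alpha i == hyp alpha j)%MS)
  (* essential: the intersection of all hyperplanes is {0} *)
  (Hess : (\bigcap_(i in [set: 'I_n]) hyp alpha i == (0 : 'M[rat]_l))%MS)
  (le : rel 'X_{1..l}) (Hle : is_term_order le)
  (p : nat) (Hp : prime p)
  (Hgood : good_prime alpha p) (Hlucky : lucky_prime alpha le p)
  (k : nat) (Hk : (0 < k)%N) (F : finFieldType) (HF : #|F| = (p ^ k)%N) :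
  coboundary_at alpha (p ^ k)%N
    = \sum_(P : 'rV[F]_l) 'X ^+ hcount alpha P.
Proof.
have charF z : (z%:~R == 0 :> F) = (p%:Z %| z)%Z := esym (dvdz_pcharf (card_finPcharP HF Hp) z).
have rk_full : rk alpha setT = l by rewrite /rk (eqmx_rank Hess) mxrank0 subn0.
have rank_charp := rank_form_mx_charp Hle Hp Hlucky charF (etrans (esym (rk_rank _ _)) rk_full).
rewrite coboundary_atE rk_full /hcount.
under [RHS]eq_bigr => P _ do rewrite -(subrK 1 'X) exprD1_subsets.
rewrite (exchange_big_dep xpredT) //=; apply: eq_bigr => B _.
rewrite (eq_bigl (mem [set P : 'rV[F]_l | B \subset zero_set alpha P])).
  by rewrite sumr_const card_common_zeros rank_charp -rk_rank HF -expnM.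
by move=> P /=; rewrite inE.
Qed.
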